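(* Let $n\ge2$ and $x\in\{0,\dots,n-1\}$ with $x\ge\frac{n+1}{2}$. Then $g_n(x)=1$; equivalently, with $k=n+1+x$, $V_n(k)\ge N(k,n)$.
   Context: Let $\mathcal X=\{A,B,C,D\}$ and let $(X_i)_{i\ge1}$ be the first-order Markov chain on $\mathcal X$ with $\mathbb P(X_1=x)=1/4$ for all $x$ and transitions: from $A$ to $A$ or $C$ w.p. $1/2$ each; from $B$ to $B$ or $D$ w.p. $1/2$ each; from $C$ and from $D$ to each of $A,B,C,D$ w.p. $1/4$. A nonempty string is admissible if all consecutive transitions have positive probability; $\mathcal A$ is the set of admissible nonempty strings; $K(u):=-\log_2\mathbb P(X_1^m=u)$ for $u=x_1^m\in\mathcal A$. $S_k:=\#\{u\in\mathcal A:K(u)=k\}$, $N(k,\ell):=\#\{u\in\mathcal A$ of length $\ell$ with $K(u)=k\}$, $W_{<n}(k):=\sum_{\ell=1}^{n-1}N(k,\ell)$, $V_n(k):=S_k/2-W_{<n}(k)$. Shortlex source code $C$: order nonempty binary strings by length then lexicographically as $b_1,b_2,\dots$; order $\mathcal A$ as $u_1,u_2,\dots$ by increasing $K$, then increasing length, then lexicographically with $A<B<C<D$; set $C(u_j):=b_j$. Let $K_n:=K(X_1^n)$, $L_n:=|C(X_1^n)|$, $I_n:=\mathbf 1\{L_n=K_n-1\}$, $X:=\#\{i\in\{1,\dots,n-1\}:X_i\in\{C,D\}\}$, and $g_n(x):=\mathbb P(I_n=1\mid X=x)$. *)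

From HB Require Import structures.
From mathcomp Require Import all_boot all_order all_algebra.
Set Implicit Arguments. Unset Strict Implicit. Unset Printing Implicit Defensive.
Import Order.TTheory GRing.Theory Num.Theory.

(* Alphabet X = {A,B,C,D} encoded as 'I_4 with A=0, B=1, C=2, D=3;
   the lexicographic order A<B<C<D is the order on the underlying nats. *)
Notation letter := 'I_4.
Definition LA : letter := @Ordinal 4 0 isT.
Definition LB : letter := @Ordinal 4 1 isT.
Definition LC : letter := @Ordinal 4 2 isT.
Definition LD : letter := @Ordinal 4 3 isT.

Definition trans (a b : letter) : rat :=
  if a == LA then (if (b == LA) || (b == LC) then (1/2)%R else 0%R)
  else if a == LB then (if (b == LB) || (b == LD) then (1/2)%R else 0%R)
  else (1/4)%R.

Definition adm (a b : letter) : bool := trans a b != 0%R.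

Definition admissible (u : seq letter) : bool :=
  if u is a :: s then path adm a s else false.

Definition Pr (u : seq letter) : rat :=
  if u is [::] then 0%R
  else ((1/4) * \prod_(p <- zip u (behead u)) trans p.1 p.2)%R.

(* -log2 of a transition probability of positive probability:
   -log2 (1/2) = 1 (from A or B), -log2 (1/4) = 2 (from C or D). *)
Definition tbits (a b : letter) : nat := if (a == LA) || (a == LB) then 1 else 2.

(* K(u) = -log2 P(X_1^m = u) = -log2(1/4) + sum of -log2 of transitions
   (for admissible u; see lemma Pr_K below). *)
Definition K (u : seq letter) : nat :=
  2 + \sum_(p <- zip u (behead u)) tbits p.1 p.2.

Fixpoint lexlt (s t : seq nat) : bool :=
  match s, t with
  | [::], [::] => false
  | [::], _ :: _ => true
  | _ :: _, [::] => false
  | a :: s', b :: t' => (a < b) || ((a == b) && lexlt s' t')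
  end.

Definition alt (v u : seq letter) : bool :=
  (K v < K u) ||
  ((K v == K u) &&
   ((size v < size u) ||
    ((size v == size u) && lexlt (map val v) (map val u)))).

(* index j of u in the enumeration u_1, u_2, ... of admissible strings
   (every v preceding u has K v <= K u, hence length < K u) *)
Definition arank (u : seq letter) : nat :=
  1 + \sum_(l < K u) #|[pred v : l.-tuple letter | admissible v && alt v u]|.

Definition bslt (t s : seq bool) : bool :=
  (size t < size s) ||
  ((size t == size s) && lexlt (map nat_of_bool t) (map nat_of_bool s)).

(* index j of a nonempty binary string s in the shortlex enumeration
   b_1, b_2, ... of nonempty binary strings, i.e. b_j = s iff brank s = j *)
Definition brank (s : seq bool) : nat :=
  1 + \sum_(l < (size s).+1) #|[pred t : l.-tuple bool | (0 < l) && bslt t s]|.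

(* I = 1{ |C(u)| = K(u) - 1 }, where C(u_j) = b_j : the codeword
   b_{arank u} has length K(u) - 1 *)
Definition Ind (u : seq letter) : bool :=
  [exists t : ((K u).-1).-tuple bool, (0 < (K u).-1) && (brank t == arank u)].

Definition isCD (a : letter) : bool := (a == LC) || (a == LD).
Definition Xcnt (n : nat) (u : seq letter) : nat := count isCD (take n.-1 u).

(* g_n(x) = P(I_n = 1 | X = x), computed over the law of X_1^n *)
Definition g (n x : nat) : rat :=
  ((\sum_(u : n.-tuple letter | (Xcnt n u == x) && Ind u) Pr u) /
   (\sum_(u : n.-tuple letter | Xcnt n u == x) Pr u))%R.

Definition Ncnt (k l : nat) : nat :=
  #|[pred u : l.-tuple letter | admissible u && (K u == k)]|.

(* S_k = #{u admissible, K(u) = k}; since K(u) >= |u| + 1 only lengths < k occur *)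
Definition Scnt (k : nat) : nat := \sum_(l < k) Ncnt k l.

Definition Wlt (n k : nat) : nat := \sum_(1 <= l < n) Ncnt k l.

Definition V (n k : nat) : rat := ((Scnt k)%:R / 2 - (Wlt n k)%:R)%R.

Local Open Scope ring_scope.
Lemma trans_bits a b : adm a b -> trans a b = (2%:R ^+ tbits a b)^-1 :> rat.
Proof.
rewrite /adm /trans /tbits.
by case: a => [[|[|[|[|]]]] ?] //=; case: b => [[|[|[|[|]]]] ?] //=.
Qed.

Lemma Pr_K u : admissible u -> Pr u = (2%:R ^+ K u)^-1.
Proof.
case: u => [|a s] //= H.
rewrite /K /= exprD expr2 !invfM.
suff -> : \prod_(p <- zip (a :: s) s) trans p.1 p.2 =
          (2%:R ^+ \sum_(p <- zip (a :: s) s) tbits p.1 p.2)^-1.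
  by rewrite mulrA; congr (_ * _); rewrite -invfM.
elim: s a H => [|b s IH] a /=; first by rewrite !big_nil invr1.
move=> /andP[Hab Hp]; rewrite !big_cons /= IH // trans_bits // exprD invfM.
done.
Qed.

(* Every string [u] of length [n] with [X = x] has [K u = k := n + 1 + x], and
   its codeword has length [k - 1] exactly when its index in the enumeration
   lies in [[2^(k-1) - 1, 2^k - 2]]. The strings with [K < k] number
   [(2^(k+1) - 4 - S_k) / 2 >= 2^(k-1) - 2], and those with [K = k] preceding
   [u] have length at most [n], so the index stays in the window as soon as
   [W_(<n)(k) + N(k, n) <= S_k / 2], which is the second claim.
   Removing the first letter gives [N(k, l+1) = N(k-1, l) + 2 N(k-2, l)], whence
   [N(k, l) = 4 * 2^j * C(l-1, j)] with [j = k - l - 1]. Lengths [n - t] and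
   [n + 1 + t] correspond to [j = x + t] and [j = x - 1 - t], and when [n < 2x]
   the weight [2^j C(s-j, j)] is smaller at the first: compare products of
   consecutive ratios at points symmetric about [x - 1/2]. *)

From mathcomp Require Import all_boot all_order all_algebra.
From mathcomp Require Import zify ring lra.
Set Implicit Arguments. Unset Strict Implicit. Unset Printing Implicit Defensive.

(** * Counting admissible strings *)

Lemma card_pred_sum (T : finType) (P : pred T) :
  #|[pred u : T | P u]| = \sum_(u : T) (P u : nat).
Proof.
by rewrite -sum1_card big_mkcond; apply: eq_bigr => u _; rewrite inE; case: (P u).
Qed.

Lemma big_tupleS (T : finType) l (F : seq T -> nat) :
  \sum_(u : l.+1.-tuple T) F u = \sum_(a : T) \sum_(w : l.-tuple T) F (a :: w).
Proof.
rewrite pair_big /=.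
pose cons_tuple (p : T * l.-tuple T) : l.+1.-tuple T := [tuple of p.1 :: p.2].
rewrite (reindex cons_tuple) //=.
exists (fun u : l.+1.-tuple T => (thead u, [tuple of behead u])) => [[a w] _|u _].
  by congr pair; apply: val_inj.
by rewrite [u in RHS]tuple_eta; apply: val_inj.
Qed.

Lemma tbits_isCD a b : tbits a b = 1 + isCD a.
Proof. by case: a => [[|[|[|[|]]]] ?]. Qed.

Lemma K_cons a b s : K [:: a, b & s] = tbits a b + K (b :: s).
Proof. by rewrite /K /= big_cons addnCA. Qed.

Lemma K_ge2 u : 2 <= K u.
Proof. exact: leq_addr. Qed.

Lemma K_count u : u != [::] -> K u = (size u).+1 + count isCD (take (size u).-1 u).
Proof.
case: u => // a s _; elim: s a => [|b s IH] a; first by rewrite /K big_nil.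
rewrite K_cons IH //= tbits_isCD; lia.
Qed.

Lemma K_Xcnt n (u : n.-tuple letter) : 0 < n -> K u = n.+1 + Xcnt n u.
Proof.
by move=> n_gt0; rewrite K_count -?size_eq0 size_tuple // -lt0n.
Qed.

Lemma size_lt_K u : admissible u -> size u < K u.
Proof. by case: u => // a s _; rewrite K_count //=; lia. Qed.

Lemma Ncnt0 k : Ncnt k 0 = 0.
Proof. by rewrite /Ncnt card_pred_sum big1 // => -[[]]. Qed.

Lemma Ncnt_small k l : k <= l -> Ncnt k l = 0.
Proof.
move=> le_kl; rewrite /Ncnt card_pred_sum big1 // => u _.
case/boolP: (admissible u) => //= /size_lt_K; rewrite size_tuple.
by case: eqP => // ->; lia.
Qed.

Lemma Ncnt1 k : Ncnt k 1 = 4 * (k == 2).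
Proof.
rewrite /Ncnt card_pred_sum.
transitivity (\sum_(u : 1.-tuple letter) (k == 2 : nat)).
  by apply: eq_bigr => -[[|a []] //= _] _; rewrite /K big_nil eq_sym.
by rewrite sum_nat_const card_tuple card_ord mulnC.
Qed.

(* Every letter has exactly one admissible predecessor in {A, B}, costing one
   bit, and two in {C, D}, costing two bits. *)
Lemma sum_adm_pred b m k : 2 <= m ->
  \sum_(a : letter) (adm a b && (tbits a b + m == k) : nat)
  = (m == k.-1) + 2 * (m == k.-2).
Proof.
move=> m_ge2; rewrite !big_ord_recl big_ord0.
by case: b => [[|[|[|[|]]]] ?] //; rewrite /adm /trans /tbits /=;
  case: k => [|[|k]] /=; lia.
Qed.

Lemma Ncnt_recS k l : Ncnt k l.+2 = Ncnt k.-1 l.+1 + 2 * Ncnt k.-2 l.+1.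
Proof.
rewrite /Ncnt !card_pred_sum.
rewrite (big_tupleS _ (fun s => admissible s && (K s == k) : nat)).
rewrite exchange_big big_distrr -big_split.
apply: eq_bigr => -[[|b s] //= _] _.
under eq_bigr => a _ do rewrite K_cons.
case: (path adm b s) => /=; last by rewrite big1 // => a _; rewrite andbF.
by under eq_bigr => a _ do rewrite andbT; rewrite sum_adm_pred ?K_ge2.
Qed.

Lemma Ncnt_rec k l : k != 2 -> Ncnt k l.+1 = Ncnt k.-1 l + 2 * Ncnt k.-2 l.
Proof.
case: l => [|l] k_neq2; last exact: Ncnt_recS.
by rewrite Ncnt1 !Ncnt0 (negbTE k_neq2).
Qed.

Lemma Ncnt_closed m j : Ncnt (m + j + 2) m.+1 = 4 * 2 ^ j * 'C(m, j).
Proof.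
elim: m j => [|m IH] j.
  rewrite Ncnt1 bin0n; case: j => [|j]; rewrite ?muln0 //.
  by rewrite (_ : (_ == 2) = false) //; lia.
rewrite (@Ncnt_rec _ m.+1); last by lia.
have -> : (m.+1 + j + 2).-1 = m + j + 2 by lia.
case: j => [|j]; first by rewrite IH Ncnt_small ?bin0 ?muln0 //; lia.
have -> : (m.+1 + j.+1 + 2).-2 = m + j + 2 by lia.
by rewrite !IH binS expnS; lia.
Qed.

Lemma Scnt_widen k M : k <= M -> \sum_(l < M) Ncnt k l = Scnt k.
Proof.
move=> le_kM; rewrite /Scnt -!(big_mkord xpredT) (big_cat_nat (leq0n k) le_kM) /=.
rewrite [X in _ + X]big1_seq ?addn0 // => l /andP[_].
by rewrite mem_index_iota => /andP[le_kl _]; apply: Ncnt_small.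
Qed.

Lemma Scnt_rec k : 2 <= k -> Scnt k.+1 = Scnt k + 2 * Scnt k.-1.
Proof.
move=> k_ge2; rewrite /Scnt big_ord_recl Ncnt0 add0n.
rewrite (eq_bigr (fun i : 'I_k => Ncnt k i + 2 * Ncnt k.-1 i)); last first.
  by move=> i _; rewrite lift0 Ncnt_rec //; lia.
by rewrite big_split -big_distrr /= (Scnt_widen (leq_pred k)).
Qed.

Lemma Scnt2 : Scnt 2 = 4.
Proof. by rewrite /Scnt !big_ord_recl big_ord0 Ncnt0 lift0 Ncnt1. Qed.

Lemma Scnt3 : Scnt 3 = 4.
Proof. by rewrite (Scnt_rec (leqnn 2)) Scnt2 /Scnt big_ord1 Ncnt0. Qed.

Lemma Scnt_pair k : 2 <= k -> Scnt k + Scnt k.+1 = 2 ^ k.+1.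
Proof.
elim: k => [|k IH] // k_ge1.
have [le_k1|k_ge2] := leqP k 1.
  have -> : k = 1 by lia.
  by rewrite Scnt2 Scnt3.
by rewrite (Scnt_rec k_ge1) expnS -IH //=; lia.
Qed.

Lemma Scnt_le k : 2 <= k -> Scnt k <= 2 ^ k.
Proof.
case: k => [|[|[|k]]] // _; first by rewrite Scnt2.
by have := Scnt_pair (_ : 2 <= k.+2); lia.
Qed.

Lemma sum_Scnt k : 2 <= k -> 2 * \sum_(j < k) Scnt j + Scnt k = 2 ^ k.+1 - 4.
Proof.
elim: k => [|k IH] // k_ge1.
have [le_k1|k_ge2] := leqP k 1.
  have -> : k = 1 by lia.
  by rewrite Scnt2 !big_ord_recl big_ord0 /Scnt /= !big_ord_recl !big_ord0 Ncnt0.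
have := Scnt_pair k_ge2; have := IH k_ge2; have := leq_pexp2l (isT : 0 < 2) k_ge2.
rewrite big_ord_recr /= !expnS; lia.
Qed.

(** * Binary codewords *)

Section StrictTotalOrderRank.

Variables (T : finType) (lt : rel T).
Hypotheses (lt_irr : irreflexive lt) (lt_trans : transitive lt)
  (lt_total : forall x y, x != y -> lt x y || lt y x).

Definition ltrank x := #|[pred y | lt y x]|.

Lemma ltrank_lt_card x : ltrank x < #|T|.
Proof.
rewrite -(cardC [pred y | lt y x]) -[X in X < _]addn0 ltn_add2l.
by apply/card_gt0P; exists x; rewrite !inE /= lt_irr.
Qed.

Lemma ltrank_mono x y : lt x y -> ltrank x < ltrank y.
Proof.
move=> lt_xy; apply/proper_card/properP; split.
  by apply/subsetP => z; rewrite !inE => /lt_trans; apply.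
by exists x; rewrite !inE ?lt_irr.
Qed.

Lemma ltrank_inj : injective ltrank.
Proof.
move=> x y eq_xy; apply/eqP; apply: contraT => /lt_total.
by case/orP=> /ltrank_mono; rewrite eq_xy ltnn.
Qed.

Lemma ltrank_onto r : r < #|T| -> exists x, ltrank x = r.
Proof.
move=> lt_rT; pose f x : 'I_#|T| := Ordinal (ltrank_lt_card x).
have f_inj : injective f by move=> x y /(congr1 val) /ltrank_inj.
have /codomP[x /(congr1 val) /= ->] :=
  inj_card_onto f_inj (eq_leq (card_ord _)) (Ordinal lt_rT).
by exists x.
Qed.

End StrictTotalOrderRank.

Lemma lexlt_irr : irreflexive lexlt.
Proof. by elim=> //= a s ->; rewrite ltnn andbF. Qed.

Lemma lexlt_trans : transitive lexlt.
Proof.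
move=> t s r; elim: s t r => [|a s IH] [|b t] [|c r] //=.
case/orP=> [lt_ba|/andP[/eqP -> lt_ts]]; case/orP=> [lt_ac|/andP[/eqP <- lt_sr]].
- by rewrite (ltn_trans lt_ba lt_ac).
- by rewrite lt_ba.
- by rewrite lt_ac.
- by rewrite eqxx (IH _ _ lt_ts lt_sr) orbT.
Qed.

Lemma lexlt_total s t : s != t -> lexlt s t || lexlt t s.
Proof.
elim: s t => [|a s IH] [|b t] //=; rewrite eqseq_cons.
by case: (ltngtP a b) => //= _ /IH; rewrite orbC.
Qed.

Definition blexlt L : rel (L.-tuple bool) :=
  fun t1 t2 => lexlt (map nat_of_bool t1) (map nat_of_bool t2).

Lemma blexlt_irr L : irreflexive (@blexlt L).
Proof. by move=> t; apply: lexlt_irr. Qed.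

Lemma blexlt_trans L : transitive (@blexlt L).
Proof. by move=> t2 t1 t3; apply: lexlt_trans. Qed.

Lemma blexlt_total L (t1 t2 : L.-tuple bool) : t1 != t2 -> blexlt t1 t2 || blexlt t2 t1.
Proof.
move=> neq_t; apply: lexlt_total; apply: contra neq_t => /eqP eq_map.
by apply/eqP/val_inj/(inj_map (_ : injective nat_of_bool) eq_map) => -[] [].
Qed.

Lemma sum_pow2 L : \sum_(l < L.+1) (0 < l) * 2 ^ l + 2 = 2 ^ L.+1.
Proof.
elim: L => [|L IH]; first by rewrite big_ord1.
by rewrite big_ord_recr /= -addnA [_ * _ + 2]addnC addnA IH mul1n [in RHS]expnS; lia.
Qed.

Lemma brank_tuple L (t : L.-tuple bool) :
  0 < L -> brank t = 2 ^ L - 1 + ltrank (@blexlt L) t.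
Proof.
move=> L_gt0; rewrite /brank size_tuple big_ord_recr /=.
have -> : #|[pred t' : L.-tuple bool | (0 < L) && bslt t' t]| = ltrank (@blexlt L) t.
  by apply: eq_card => t'; rewrite !inE /= L_gt0 /bslt !size_tuple ltnn eqxx.
rewrite (eq_bigr (fun l : 'I_L => (0 < l) * 2 ^ l)); last first.
  move=> l _; rewrite card_pred_sum.
  under eq_bigr => t' _ do rewrite /bslt !size_tuple ltn_ord andbT.
  by rewrite sum_nat_const card_tuple card_bool mulnC.
case: L t L_gt0 => // L t _.
have := sum_pow2 L; set S := \sum_(l < L.+1) _; lia.
Qed.

Lemma brank_onto L r : 0 < L -> 2 ^ L <= r.+1 -> r.+2 <= 2 ^ L.+1 ->
  exists t : L.-tuple bool, brank t = r.
Proof.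
move=> L_gt0 lo hi.
have [|t rk_t] := @ltrank_onto _ _ (@blexlt_irr L) (@blexlt_trans L)
  (@blexlt_total L) (r - (2 ^ L - 1)).
  by rewrite card_tuple card_bool; move: hi; rewrite expnS; lia.
by exists t; rewrite brank_tuple // rk_t; lia.
Qed.

(** * Position of a string in the source code *)

Lemma alt_irr u : alt u u = false.
Proof. by rewrite /alt !ltnn !eqxx lexlt_irr. Qed.

Lemma Wlt_Ncnt n k : Wlt n k + Ncnt k n = \sum_(l < n.+1) Ncnt k l.
Proof.
rewrite /Wlt; case: n => [|n]; first by rewrite big_geq // big_ord1 !Ncnt0.
by rewrite -big_nat_recr // -(big_mkord xpredT) [RHS]big_ltn // Ncnt0.
Qed.

Definition Nlt k l := #|[pred v : l.-tuple letter | admissible v && (K v < k)]|.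

Definition Nprec u l := #|[pred v : l.-tuple letter | admissible v && alt v u]|.

Lemma Nlt_sum k l : Nlt k l = \sum_(j < k) Ncnt j l.
Proof.
elim: k => [|k IH].
  by rewrite big_ord0 /Nlt card_pred_sum big1 // => v _; rewrite andbF.
rewrite big_ord_recr /= -IH /Nlt /Ncnt !card_pred_sum -big_split /=.
by apply: eq_bigr => v _; rewrite ltnS leq_eqVlt; case: admissible; case: ltngtP.
Qed.

Lemma sum_Nlt k : \sum_(l < k) Nlt k l = \sum_(j < k) Scnt j.
Proof.
under eq_bigr => l _ do rewrite Nlt_sum.
by rewrite exchange_big; apply: eq_bigr => j _; apply/Scnt_widen/ltnW.
Qed.

Lemma Nlt_le_Nprec u l : Nlt (K u) l <= Nprec u l.
Proof.
rewrite /Nlt /Nprec !card_pred_sum; apply: leq_sum => v _.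
by rewrite /alt; case: admissible; case: (K v < K u).
Qed.

(* [u] itself is counted on the right but not on the left, hence the [l == n]. *)
Lemma Nprec_le n (u : n.-tuple letter) l : admissible u ->
  Nprec u l + (l == n) <= Nlt (K u) l + (l <= n) * Ncnt (K u) l.
Proof.
move=> adm_u; rewrite /Nlt /Nprec /Ncnt !card_pred_sum big_distrr -big_split /=.
have le_v (v : l.-tuple letter) : (admissible v && alt v u : nat)
    <= (admissible v && (K v < K u)) + (l <= n) * (admissible v && (K v == K u)).
  case: admissible => //=; rewrite /alt !size_tuple.
  case: ltngtP => //= _; case: ltngtP => //= _; first by case: lexlt.
case: eqP => [eq_ln|_]; last by rewrite addn0; apply: leq_sum.
subst l; rewrite (bigD1 u) // [X in _ <= X](bigD1 u) //= alt_irr andbF.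
rewrite adm_u ltnn eqxx leqnn add0n addnC leq_add2l.
by apply: leq_sum => v _; have := le_v v; rewrite leqnn.
Qed.

Lemma arank_bounds n (u : n.-tuple letter) : admissible u ->
  1 + \sum_(j < K u) Scnt j <= arank u
  <= \sum_(j < K u) Scnt j + (Wlt n (K u) + Ncnt (K u) n).
Proof.
move=> adm_u; have lt_nK : n < K u by rewrite -{1}(size_tuple u) size_lt_K.
rewrite /arank -sum_Nlt; apply/andP; split.
  by rewrite leq_add2l; apply/leq_sum => l _; apply: Nlt_le_Nprec.
have le_Nprec : \sum_(l < K u) (Nprec u l + (val l == n))
    <= \sum_(l < K u) (Nlt (K u) l + (l <= n) * Ncnt (K u) l).
  by apply: leq_sum => l _; apply: Nprec_le.
have cut_n : \sum_(l < K u) (l <= n) * Ncnt (K u) l = Wlt n (K u) + Ncnt (K u) n.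
  rewrite Wlt_Ncnt (big_ord_widen _ (Ncnt (K u)) lt_nK) [RHS]big_mkcond /=.
  by apply: eq_bigr => l _; rewrite ltnS; case: (_ <= n); rewrite ?mul1n ?mul0n.
have one_n : \sum_(l < K u) (val l == n : nat) = 1.
  rewrite (bigD1 (Ordinal lt_nK)) //= eqxx big1 // => l neq_l.
  by case: eqP => // eq_ln; case/eqP: neq_l; apply: val_inj.
by move: le_Nprec; rewrite /Nprec !big_split /= cut_n one_n; lia.
Qed.

(** * Comparing strings of complementary lengths *)

Section RatioReflection.

Variables (f p q : nat -> nat) (c : nat).
Hypothesis f_ratio : forall j, f j.+1 * p j = q j * f j.
Hypothesis p_gt0 : forall t, t < c -> 0 < p (c.-1 + t) * p (c.-1 - t).
Hypothesis qq_le_pp : forall t, t < c ->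
  q (c.-1 + t) * q (c.-1 - t) <= p (c.-1 + t) * p (c.-1 - t).

(* Multiplying the ratios [f (j + 1) / f j] at two points symmetric about
   [c - 1] moves both ends of the comparison one step outwards. *)
Lemma ratio_reflect t : t < c -> f (c + t) <= f (c.-1 - t).
Proof.
elim: t => [|t IH] lt_tc.
  have := qq_le_pp lt_tc; have := p_gt0 lt_tc; rewrite addn0 subn0 muln_gt0 andbb.
  move=> p_pos le_qq; have le_qp : q c.-1 <= p c.-1 by rewrite -leq_sqr; exact: le_qq.
  rewrite (_ : c + 0 = c.-1.+1); last by lia.
  by rewrite -(leq_pmul2r p_pos) f_ratio mulnC leq_mul2l le_qp orbT.
have [i_eq j_eq] : c.-1 + t.+1 = c + t /\ (c.-1 - t.+1).+1 = c.-1 - t by lia.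
have := p_gt0 lt_tc; have := qq_le_pp lt_tc; rewrite i_eq muln_gt0.
move=> le_qq /andP[pi_gt0 pj_gt0].
have pp_gt0 : 0 < p (c + t) * p (c.-1 - t.+1) by rewrite muln_gt0 pi_gt0.
rewrite -(leq_pmul2r pp_gt0) addnS mulnA f_ratio.
apply: (@leq_trans (q (c + t) * f (c.-1 - t) * p (c.-1 - t.+1))).
  by rewrite leq_mul2r leq_mul2l (IH (ltnW lt_tc)) !orbT.
by rewrite -mulnA -j_eq f_ratio mulnA mulnC leq_mul2l le_qq orbT.
Qed.

End RatioReflection.

(* Number of tilings of a strip of length [s] by monominoes and [j] dominoes
   of two colours. *)
Definition domino s j := 2 ^ j * 'C(s - j, j).

Lemma domino_ratio s j :
  domino s j.+1 * (j.+1 * (s - j)) = 2 * (s - 2 * j) * (s - 2 * j - 1) * domino s j.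
Proof.
rewrite /domino; have [lt_s|le_s] := ltnP s (2 * j + 2).
  rewrite bin_small; last by lia.
  by rewrite (_ : s - 2 * j - 1 = 0) ?muln0 ?mul0n //; lia.
have [r ->] : exists r, s = 2 * j + 2 + r by exists (s - (2 * j + 2)); lia.
have -> : 2 * j + 2 + r - j.+1 = j + 1 + r by lia.
have -> : 2 * j + 2 + r - j = (j + 1 + r).+1 by lia.
have -> : 2 * j + 2 + r - 2 * j - 1 = r + 1 by lia.
have -> : 2 * j + 2 + r - 2 * j = (r + 1).+1 by lia.
have E1 := mul_bin_left (j + 1 + r) j; have E2 := mul_bin_down (j + 1 + r).+1 j.
rewrite (_ : j + 1 + r - j = r + 1) in E1; last by lia.
rewrite /= (_ : (j + 1 + r).+1 - j = (r + 1).+1) in E2; last by lia.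
set m := j + 1 + r in E1 E2 *; set X := 'C(m, j.+1) in E1 *.
set Y := 'C(m, j) in E1 E2 *; set Z := 'C(m.+1, j) in E2 *; set P := 2 ^ j.
rewrite expnS -/P.
transitivity (2 * P * m.+1 * (j.+1 * X)); first by ring.
rewrite E1; transitivity (2 * P * (r + 1) * (m.+1 * Y)); first by ring.
by rewrite E2; ring.
Qed.

(* With [i, j := x - 1 +- t], the numerator factors [s - 2i], [s - 2j] are
   matched against [i + 1], [j + 1] and the others against [s - i], [s - j]. *)
Lemma domino_ratio_pair s x t : 2 * x <= s -> s.+2 <= 3 * x -> t < x ->
  2 * (s - 2 * (x.-1 + t)) * (s - 2 * (x.-1 + t) - 1)
    * (2 * (s - 2 * (x.-1 - t)) * (s - 2 * (x.-1 - t) - 1))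
  <= (x.-1 + t).+1 * (s - (x.-1 + t)) * ((x.-1 - t).+1 * (s - (x.-1 - t))).
Proof.
move=> lo hi lt_tx.
have [small|] := leqP (s - 2 * (x.-1 + t)) 1.
  by rewrite (_ : s - 2 * (x.-1 + t) - 1 = 0) ?muln0 ?mul0n //; lia.
move=> big; have [e [d [-> ->]]] :
  exists e d, x = e + d + 2 * t + 2 /\ s = 3 * e + 2 * d + 6 * t + 4.
  by exists (s - 2 * x - 2 * t), (3 * x - 2 - s); lia.
rewrite (_ : _ - 2 * (_ + t) = e + 2); last by lia.
rewrite (_ : _ - 2 * (_ - t) = e + 4 * t + 2); last by lia.
rewrite (_ : (_ + t).+1 = e + d + 3 * t + 2); last by lia.
rewrite (_ : (_ - t).+1 = e + d + t + 2); last by lia.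
rewrite (_ : _ - (_ + t) = 2 * e + d + 3 * t + 3); last by lia.
rewrite (_ : _ - (_ - t) = 2 * e + d + 5 * t + 3); last by lia.
have le_A : (e + 2) * (e + 4 * t + 2) <= (e + d + 3 * t + 2) * (e + d + t + 2) by nia.
have le_B : 4 * (e + 1) * (e + 4 * t + 1)
    <= (2 * e + d + 3 * t + 3) * (2 * e + d + 5 * t + 3) by nia.
have := leq_mul le_A le_B; rewrite (_ : e + 2 - 1 = e + 1); last by lia.
rewrite (_ : e + 4 * t + 2 - 1 = e + 4 * t + 1); last by lia.
congr (_ <= _); ring.
Qed.

Lemma domino_reflect s x t : 2 * x <= s -> s.+2 <= 3 * x -> t < x ->
  domino s (x + t) <= domino s (x.-1 - t).
Proof.
move=> lo hi; apply: (@ratio_reflect (domino s) (fun j => j.+1 * (s - j))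
  (fun j => 2 * (s - 2 * j) * (s - 2 * j - 1))) => [j|t' lt_t'x|t' lt_t'x].
- exact: domino_ratio.
- by rewrite !muln_gt0; lia.
- exact: domino_ratio_pair.
Qed.

Lemma Ncnt_domino k l : 0 < l < k -> Ncnt k l = 4 * domino (k - 2) (k - l - 1).
Proof.
move=> /andP[l_gt0 lt_lk]; have := Ncnt_closed l.-1 (k - l - 1).
rewrite prednK // (_ : l.-1 + _ + 2 = k); last by lia.
by rewrite /domino mulnA (_ : k - 2 - _ = l.-1) //; lia.
Qed.

Lemma Ncnt_reflect n x t : x < n -> n < 2 * x -> t < n ->
  Ncnt (n + 1 + x) (n - t) <= Ncnt (n + 1 + x) (n.+1 + t).
Proof.
move=> lt_xn lt_n2x lt_tn; rewrite Ncnt_domino; last by lia.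
have -> : n + 1 + x - 2 = n.-1 + x by lia.
rewrite (_ : _ - (n - t) - 1 = x + t); last by lia.
have [lt_tx|le_xt] := ltnP t x; last by rewrite /domino bin_small ?muln0 //; lia.
rewrite Ncnt_domino; last by lia.
rewrite (_ : n + 1 + x - 2 = n.-1 + x); last by lia.
rewrite (_ : _ - (n.+1 + t) - 1 = x.-1 - t); last by lia.
by rewrite leq_mul2l domino_reflect //; lia.
Qed.

Lemma Wlt_Ncnt_le_half n x : x < n -> n < 2 * x ->
  2 * (Wlt n (n + 1 + x) + Ncnt (n + 1 + x) n) <= Scnt (n + 1 + x).
Proof.
move=> lt_xn lt_n2x; set k := n + 1 + x.
rewrite -(@Scnt_widen k (n.+1 + n)); last by rewrite /k; lia.
rewrite big_split_ord /= Wlt_Ncnt mul2n -addnn leq_add2l.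
rewrite big_ord_recl Ncnt0 add0n (reindex_inj rev_ord_inj) /=.
apply: leq_sum => t _; rewrite /bump add1n subnSK //.
exact: Ncnt_reflect.
Qed.

(** * The conditional probability *)

Lemma Ind_of_arank u : 1 < K u ->
  2 ^ (K u).-1 <= (arank u).+1 -> (arank u).+2 <= 2 ^ K u -> Ind u.
Proof.
move=> K_gt1 lo hi; have L_gt0 : 0 < (K u).-1 by rewrite ltn_predRL.
have [|t brank_t] := brank_onto L_gt0 lo; first by rewrite prednK // ltnW.
by apply/existsP; exists t; rewrite brank_t eqxx L_gt0.
Qed.

Lemma Ind_of_Xcnt n x (u : n.-tuple letter) : x < n -> n < 2 * x ->
  admissible u -> Xcnt n u = x -> Ind u.
Proof.
move=> lt_xn lt_n2x adm_u Xu.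
have Ku : K u = n + 1 + x by rewrite K_Xcnt ?Xu ?addn1 //; lia.
have half := Wlt_Ncnt_le_half lt_xn lt_n2x; rewrite -Ku in half.
have /andP[lo hi] := arank_bounds adm_u.
have [L KL] : exists L, K u = L.+2 by exists (n + x).-1; lia.
have := sum_Scnt (isT : 2 <= L.+2); have := @Scnt_le L.+2 isT.
move: lo hi half; rewrite KL; set C := \sum_(j < L.+2) Scnt j.
move=> lo hi half le_S sum_S.
by apply: Ind_of_arank; rewrite KL //=; move: le_S sum_S; rewrite !expnS; lia.
Qed.

Lemma exists_Xcnt n x : x < n ->
  exists u : n.-tuple letter, admissible u && (Xcnt n u == x).
Proof.
move=> lt_xn; set s := nseq x LC ++ nseq (n - x) LA.
have size_s : size s == n by rewrite size_cat !size_nseq subnKC // ltnW.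
have path_A m : path adm LA (nseq m LA) by elim: m => //= m ->.
have path_C m y : path adm LC (nseq y LC ++ nseq m LA).
  by elim: y => [|y IH] //=; case: m => //= m; rewrite path_A.
exists (Tuple size_s); apply/andP; split.
  by rewrite /= /s; case: x lt_xn {s size_s} => [|x] /=; case: n => //= n.
rewrite /Xcnt /= take_cat size_nseq (_ : n.-1 < x = false); last by lia.
by rewrite count_cat take_nseq ?count_nseq /= ?mul1n ?mul0n ?addn0 //; lia.
Qed.

Import Order.TTheory GRing.Theory Num.Theory.

Lemma Pr_eq0 u : ~~ admissible u -> Pr u = 0%R.
Proof.
case: u => [|a s] //= not_path; apply/eqP; rewrite mulf_eq0; apply/orP; right.
elim: s a not_path => [|b s IH] a //=; rewrite big_cons mulf_eq0.
by case/nandP => [/negbNE -> // | /IH ->]; rewrite orbT.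
Qed.

Lemma Pr_ge0 u : (0 <= Pr u)%R.
Proof.
case/boolP: (admissible u) => [/Pr_K ->|/Pr_eq0 ->] //.
by rewrite invr_ge0 exprn_ge0.
Qed.

Lemma g_eq1 n x : x < n -> n < 2 * x -> g n x = 1%R.
Proof.
move=> lt_xn lt_n2x; rewrite /g.
have -> : (\sum_(u : n.-tuple letter | (Xcnt n u == x) && Ind u) Pr u
          = \sum_(u : n.-tuple letter | Xcnt n u == x) Pr u)%R.
  rewrite big_mkcondr; apply: eq_bigr => u /eqP Xu.
  case/boolP: (admissible u) => [adm_u|/Pr_eq0 ->]; last by case: Ind.
  by rewrite (Ind_of_Xcnt lt_xn lt_n2x adm_u Xu).
have [u0 /andP[adm_u0 Xu0]] := exists_Xcnt lt_xn.
apply/divff/lt0r_neq0; rewrite (bigD1 u0) //= ltr_pwDl ?sumr_ge0 // => [|u _].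
  by rewrite Pr_K // invr_gt0 exprn_gt0.
exact: Pr_ge0.
Qed.

Theorem mainTheorem9 (n x : nat) :
  (2 <= n)%N -> (x < n)%N -> (n.+1 <= 2 * x)%N ->
  g n x = 1%R /\ ((Ncnt (n + 1 + x) n)%:R <= V n (n + 1 + x))%R.
Proof.
move=> _ lt_xn lt_n2x; split; first exact: g_eq1.
have := Wlt_Ncnt_le_half lt_xn lt_n2x; rewrite -(ler_nat rat) natrM natrD /V.
by move=> half; lra.
Qed.
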